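(* Let $A$ be an integral domain and $B$ an overring of $A$ that is well-centered on $A$. If there exist finitely many valuation overrings $V_1,\dots,V_n$ of $A$ such that $A=B\cap V_1\cap\cdots\cap V_n$, then $B$ is a localization of $A$.
   Context: For an integral domain $A$ with field of fractions $K$, an overring is a subring of $K$ containing $A$; a valuation overring is an overring that is a valuation domain. $B$ is well-centered on $A$ if for each $b\in B$ there is a unit $u$ of $B$ with $ub\in A$. $B$ is a localization of $A$ if $B=S^{-1}A$ for a multiplicatively closed set $S$ of nonzero elements of $A$. *)

From HB Require Import structures.
From mathcomp Require Import all_boot all_algebra.
Set Implicit Arguments. Unset Strict Implicit. Unset Printing Implicit Defensive.
Import GRing.Theory.
Local Open Scope ring_scope.

(* All rings are subrings of a fixed field K; sets are Prop-valued predicates on K. *)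
Section Defs.
Variable K : fieldType.

Definition is_subring (R : K -> Prop) : Prop :=
  [/\ R 1, (forall x y, R x -> R y -> R (x - y)) & (forall x y, R x -> R y -> R (x * y))].

Definition is_fraction_field_of (A : K -> Prop) : Prop :=
  forall x : K, exists a b : K, [/\ A a, A b, b != 0 & x = a / b].

Definition overring (A B : K -> Prop) : Prop :=
  is_subring B /\ (forall x, A x -> B x).

(* V is a valuation domain (its fraction field is K, since it contains A) *)
Definition valuation_domain (V : K -> Prop) : Prop :=
  is_subring V /\ (forall x : K, x != 0 -> V x \/ V x^-1).

Definition valuation_overring (A V : K -> Prop) : Prop :=
  overring A V /\ valuation_domain V.

Definition unit_of (B : K -> Prop) (u : K) : Prop :=
  [/\ B u, u != 0 & B u^-1].

Definition well_centered (A B : K -> Prop) : Prop :=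
  forall b, B b -> exists u, unit_of B u /\ A (u * b).

Definition mult_closed_nonzero (A S : K -> Prop) : Prop :=
  [/\ (forall s, S s -> A s /\ s != 0), S 1 & (forall s t, S s -> S t -> S (s * t))].

Definition is_localization (A B : K -> Prop) : Prop :=
  exists S : K -> Prop, mult_closed_nonzero A S /\
    (forall x, B x <-> exists a s, [/\ A a, S s & x = a / s]).
End Defs.

(* For b in B we find x in Z[b], x <> 0, with 1/x and b/x in every V_i.
   Well-centeredness gives a unit u of B with u x in A; as A = B ∩ V_1 ∩ ... ∩ V_n,
   both u = (u x)/x and u b = (u x)(b/x) lie in A.  Hence b = (u b)/u has its
   denominator in S = {s in A | 1/s in B}, and B = S^-1 A.
   One takes x = 1 + b + ... + b^N with N > 0.  If b is not in V_i, then
   b^-N x = 1 + b^-1 + ... + b^-N is a unit of V_i, as b^-1 is in the maximal ideal.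
   If b is in V_i, the lengths k for which 1 + ... + b^(k-1) lies in the maximal
   ideal are closed under taking multiples, so one N serves all such V_i at once:
   1 + ... + b^(N-1) is in the maximal ideal, hence x = 1 + b (1 + ... + b^(N-1))
   is a unit; and where no such length exists, x is a unit anyway. *)
From mathcomp Require Import all_boot all_algebra.
From mathcomp Require Import ring.
From Stdlib Require Import Classical.
Import GRing.Theory.
Local Open Scope ring_scope.

Section Overrings.
Set Implicit Arguments.
Unset Strict Implicit.
Variable K : fieldType.

Section Subring.
Variable R : K -> Prop.
Hypothesis R_subring : is_subring R.

Lemma subring1 : R 1.
Proof. by case: R_subring. Qed.

Lemma subringB x y : R x -> R y -> R (x - y).
Proof. by case: R_subring => _ + _; apply. Qed.

Lemma subringM x y : R x -> R y -> R (x * y).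
Proof. by case: R_subring => _ _; apply. Qed.

Lemma subring0 : R 0.
Proof. by rewrite -(subrr 1); apply: subringB; apply: subring1. Qed.

Lemma subringN x : R x -> R (- x).
Proof. by move=> Rx; rewrite -sub0r; apply: subringB => //; apply: subring0. Qed.

Lemma subringD x y : R x -> R y -> R (x + y).
Proof. by move=> Rx Ry; rewrite -[y]opprK; apply: subringB => //; apply: subringN. Qed.

Lemma subringX x k : R x -> R (x ^+ k).
Proof.
move=> Rx; elim: k => [|k IHk]; first by rewrite expr0; apply: subring1.
by rewrite exprS; apply: subringM.
Qed.

End Subring.

Fixpoint geosum (b : K) (N : nat) : K :=
  if N is N'.+1 then 1 + b * geosum b N' else 0.

Lemma geosumS b N : geosum b N.+1 = 1 + b * geosum b N.
Proof. by []. Qed.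

Lemma geosumD b N M : geosum b (N + M) = geosum b N + b ^+ N * geosum b M.
Proof.
elim: N => [|N IHN]; first by rewrite add0n add0r expr0 mul1r.
by rewrite addSn /= IHN exprS mulrDr addrA mulrA.
Qed.

Lemma geosumSr b N : geosum b N.+1 = geosum b N + b ^+ N.
Proof. by rewrite -addn1 geosumD /= mulr0 addr0 mulr1. Qed.

Lemma geosum_rev b c N : c * b = 1 -> c ^+ N * geosum b N.+1 = geosum c N.+1.
Proof.
move=> cb1; elim: N => [|N IHN]; first by rewrite expr0 mul1r /= !mulr0.
rewrite [geosum b N.+2]/= mulrDr mulr1 exprSr mulrA -(mulrA _ c b) cb1 mulr1 IHN.
by rewrite [RHS]geosumSr exprSr addrC.
Qed.

Lemma subring_geosum (R : K -> Prop) b N : is_subring R -> R b -> R (geosum b N).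
Proof.
move=> hR Rb; elim: N => [|N IHN] /=; first exact: subring0.
by apply: (subringD hR (subring1 hR)); apply: subringM.
Qed.

Definition nonunit_of (V : K -> Prop) (x : K) : Prop := V x /\ ~ unit_of V x.

Definition geosum_saturates (V : K -> Prop) (b : K) (N : nat) : Prop :=
  V b -> forall M, (0 < M)%N -> nonunit_of V (geosum b M) -> nonunit_of V (geosum b N).

Section ValuationDomain.
Variable V : K -> Prop.
Hypothesis V_valuation : valuation_domain V.
Let V_subring : is_subring V := V_valuation.1.

Lemma unit_of1 : unit_of V 1.
Proof. by split; [apply: subring1 | apply: oner_neq0 | rewrite invr1; apply: subring1]. Qed.

Lemma unit_or_nonunit x : V x -> unit_of V x \/ nonunit_of V x.
Proof. by move=> Vx; case: (classic (unit_of V x)) => ?; [left | right]. Qed.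

Lemma nonunitMl r x : V r -> nonunit_of V x -> nonunit_of V (r * x).
Proof.
move=> Vr [Vx xNunit]; split; first exact: subringM.
case=> _ rx0 Vrx_inv; apply: xNunit; split => //.
  by apply: contraNneq rx0 => ->; rewrite mulr0.
have r0 : r != 0 by apply: contraNneq rx0 => ->; rewrite mul0r.
by rewrite -[x^-1](mulVKf r0) -invfM; apply: subringM.
Qed.

Lemma nonunitMr x r : nonunit_of V x -> V r -> nonunit_of V (x * r).
Proof. by rewrite mulrC => xNunit Vr; apply: nonunitMl. Qed.

Lemma nonunitD x y : nonunit_of V x -> nonunit_of V y -> nonunit_of V (x + y).
Proof.
move=> [Vx xNunit] [Vy yNunit]; split; first exact: subringD.
case=> _ xy0 Vxy_inv.
have [x0|x0] := eqVneq x 0; first by apply: yNunit; rewrite x0 add0r in xy0 Vxy_inv.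
have [y0|y0] := eqVneq y 0; first by apply: xNunit; rewrite y0 addr0 in xy0 Vxy_inv.
have inv_ratio z w : z != 0 -> V (w / z) -> w + z != 0 -> V ((w + z)^-1) -> V z^-1.
  move=> z0 Vwz wz0 Vwz_inv.
  have -> : z^-1 = (w / z + 1) * (w + z)^-1 by field; rewrite z0 wz0.
  by apply: subringM => //; apply: subringD => //; apply: subring1.
case: (V_valuation.2 (x / y)); first by rewrite mulf_neq0 ?invr_eq0.
  by move=> Vxy; apply: yNunit; split; last exact: inv_ratio Vxy xy0 Vxy_inv.
rewrite invf_div => Vyx; apply: xNunit; split => //.
by apply: (inv_ratio x y x0 Vyx); rewrite addrC.
Qed.

Lemma unitD_nonunit u y : unit_of V u -> nonunit_of V y -> unit_of V (u + y).
Proof.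
move=> u_unit yNunit; have [[Vu _ _] Vy] := (u_unit, yNunit.1).
case: (unit_or_nonunit (subringD V_subring Vu Vy)) => // uyNunit; exfalso.
have := nonunitD uyNunit (nonunitMl (subringN V_subring (subring1 V_subring)) yNunit).
by rewrite mulN1r addrK => -[_]; apply.
Qed.

Lemma nonunit_inv_notin b : ~ V b -> b != 0 /\ nonunit_of V b^-1.
Proof.
move=> Vb; have b0 : b != 0 by apply: contra_notN Vb => /eqP ->; apply: subring0.
split=> //; split; first by case: (V_valuation.2 b b0).
by case=> _ _; rewrite invrK.
Qed.

Lemma nonunit_geosum_dvd b N M :
  V b -> nonunit_of V (geosum b N) -> (N %| M)%N -> nonunit_of V (geosum b M).
Proof.
move=> Vb NNunit /dvdnP [k ->]; rewrite mulnC.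
elim: k => [|k IHk].
  by rewrite muln0; split; [apply: subring0 | case=> _; rewrite eqxx].
rewrite mulnS geosumD; apply: nonunitD NNunit _.
exact: (nonunitMl (subringX V_subring _ Vb) IHk).
Qed.

Lemma geosum_inv_in b N :
  (0 < N)%N -> geosum_saturates V b N ->
  let x := geosum b N.+1 in [/\ x != 0, V x^-1 & V (b / x)].
Proof.
case: N => [//|N] _ satN x.
have [Vb|Vb] := classic (V b).
  have [Vx x0 Vx_inv] : unit_of V x.
    have unit_of_nonunit : nonunit_of V (geosum b N.+1) -> unit_of V x.
      by move=> NNunit; apply: (unitD_nonunit unit_of1 (nonunitMl Vb NNunit)).
    case: (unit_or_nonunit (subring_geosum N.+2 V_subring Vb)) => // xNunit.
    exact/unit_of_nonunit/(satN Vb N.+2).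
  by split=> //; apply: subringM.
have [b0 cNunit] := nonunit_inv_notin Vb; have Vc := cNunit.1.
pose y := b^-1 ^+ N.+1 * x.
have [_ y0 Vy_inv] : unit_of V y.
  rewrite /y /x geosum_rev ?mulVf // geosumS; apply: (unitD_nonunit unit_of1).
  exact: (nonunitMr cNunit (subring_geosum _ V_subring Vc)).
have cN0 k : b^-1 ^+ k != 0 by rewrite expf_neq0 ?invr_eq0.
have x0 : x != 0 by apply: contraNneq y0; rewrite /y => ->; rewrite mulr0.
split=> //.
  have -> : x^-1 = b^-1 ^+ N.+1 * y^-1 by rewrite /y; field; rewrite x0 cN0.
  exact: (subringM V_subring (subringX V_subring _ Vc) Vy_inv).
have -> : b / x = b^-1 ^+ N * y^-1 by rewrite /y exprS; field; rewrite b0 x0 cN0.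
exact: (subringM V_subring (subringX V_subring _ Vc) Vy_inv).
Qed.

End ValuationDomain.

Lemma geosum_common_exponent (I : finType) (V : I -> K -> Prop) b :
  (forall i, valuation_domain (V i)) ->
  exists2 N, (0 < N)%N & forall i, geosum_saturates (V i) b N.
Proof.
move=> V_valuation.
have [f f_gt0 sat_f] : exists2 f : I -> nat, forall i, (0 < f i)%N &
    forall i, geosum_saturates (V i) b (f i).
  apply: (@fin_all_exists2 _ _ (fun _ N => 0 < N)%N (fun i => geosum_saturates (V i) b)).
  move=> i; case: (classic (exists M, [/\ V i b, (0 < M)%N & nonunit_of (V i) (geosum b M)])).
    by move=> [M [_ M0 MNunit]]; exists M.
  by move=> noM; exists 1%N => // Vb M M0 MNunit; case: noM; exists M.
exists (\prod_i f i)%N => [|i Vb M M0 MNunit]; first exact: prodn_gt0.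
apply: nonunit_geosum_dvd (sat_f i Vb M M0 MNunit) _ => //.
by rewrite (bigD1 i) //= dvdn_mulr.
Qed.

Lemma exists_common_denominator (I : finType) (V : I -> K -> Prop) b :
  (forall i, valuation_domain (V i)) ->
  exists x, [/\ x != 0, forall R, is_subring R -> R b -> R x
    & forall i, V i x^-1 /\ V i (b / x)].
Proof.
move=> V_valuation; case: (pickP (fun _ : I => true)) => [i0 _ | I0]; last first.
  exists 1; split=> [|R hR _|i]; [exact: oner_neq0 | exact: subring1 hR | by have := I0 i].
have [N N0 hN] := geosum_common_exponent b V_valuation.
have x_inv_in i := geosum_inv_in (V_valuation i) N0 (hN i).
exists (geosum b N.+1); split; first by case: (x_inv_in i0).
  by move=> R hR Rb; apply: subring_geosum.
by move=> i; case: (x_inv_in i).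
Qed.

Definition denominators (A B : K -> Prop) (s : K) : Prop := [/\ A s, s != 0 & B s^-1].

Lemma mult_closed_denominators A B :
  is_subring A -> is_subring B -> mult_closed_nonzero A (denominators A B).
Proof.
move=> hA hB; split; first by move=> s [].
  by split; [apply: subring1 | apply: oner_neq0 | rewrite invr1; apply: subring1].
move=> s t [As s0 Bs] [At t0 Bt]; split; first exact: subringM.
  by rewrite mulf_neq0.
by rewrite invfM; apply: subringM.
Qed.

Lemma localization_denominators A B :
  is_subring A -> overring A B ->
  (forall b, B b -> exists s, denominators A B s /\ A (s * b)) ->
  is_localization A B.
Proof.
move=> hA [hB AB] hden; exists (denominators A B).
split; first exact: mult_closed_denominators.
move=> b; split.
  move=> Bb; have [s [[As s0 Bs] Asb]] := hden b Bb.
  by exists (s * b), s; split=> //; rewrite mulrC mulKf.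
by move=> [a [s [Aa [_ _ Bs] ->]]]; exact: (subringM hB (AB a Aa) Bs).
Qed.

End Overrings.

Theorem theorem4p13 (K : fieldType) (A B : K -> Prop) (n : nat)
    (V : 'I_n -> K -> Prop) :
  is_subring A -> is_fraction_field_of A ->
  overring A B -> well_centered A B ->
  (forall i, valuation_overring A (V i)) ->
  (forall x, A x <-> (B x /\ forall i, V i x)) ->
  is_localization A B.
Proof.
move=> hA _ [hB AB] well_centeredAB V_valuation A_eq.
apply: localization_denominators => // b Bb.
have [x [x0 Zb_x x_inv_in]] := exists_common_denominator b (fun i => (V_valuation i).2).
have [u [[Bu u0 Bu_inv] Aux]] := well_centeredAB x (Zb_x B hB Bb).
have [_ Vux] := (A_eq _).1 Aux.
have V_subring i : is_subring (V i) by case: (V_valuation i) => _ [].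
exists u; split; first split=> //.
  rewrite A_eq; split=> // i; have -> : u = (u * x) * x^-1 by rewrite mulfK.
  exact: (subringM (V_subring i) (Vux i) (x_inv_in i).1).
rewrite A_eq; split; first exact: subringM.
move=> i; have -> : u * b = (u * x) * (b / x) by field; rewrite x0.
exact: (subringM (V_subring i) (Vux i) (x_inv_in i).2).
Qed.
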